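(* A real Banach space $X$ has the Uniform Mazur Intersection Property if and only if $\beta(t) > 0$ for every $0<t<1$.
   Context: $B(\cdot)$, $S(\cdot)$ denote closed unit ball and unit sphere. $X$ has the Uniform Mazur Intersection Property (UMIP) if for every $\varepsilon>0$ there is $K>0$ such that for every closed bounded convex $C \subseteq X$ and $p \in X$ with $\operatorname{diam}(C) < 1/\varepsilon$ and $d(p,C) \geq \varepsilon$, there is a closed ball $B[x_0,r_0] \supseteq C$ with $d(p, B[x_0,r_0]) \geq \varepsilon/2$ and $r_0 \leq K$. For $f \in S(X^* )$, $x \in S(X)$, $0<t<1$: $\beta(f,x,t) := \inf\{1 - g(x) : g \in B(X^* ),\ \|f-g\| \geq t\}$, $\beta(f,t) := \sup_{x \in S(X)} \beta(f,x,t)$, and $\beta(t) := \inf_{f \in S(X^* )} \beta(f,t)$. *)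

From HB Require Import structures.
From mathcomp Require Import all_boot all_order all_algebra.
From mathcomp Require Import all_classical all_reals all_analysis.
Set Implicit Arguments. Unset Strict Implicit. Unset Printing Implicit Defensive.
Import Order.TTheory GRing.Theory Num.Theory.
Import numFieldNormedType.Exports.
Local Open Scope classical_set_scope.
Local Open Scope ring_scope.

Definition is_dual (R : realType) (X : normedModType R) (f : X -> R) : Prop :=
  (forall (a : R) (x y : X), f (a *: x + y) = a * f x + f y) /\ continuous f.

Definition unit_ball (R : realType) (X : normedModType R) : set X :=
  [set x | `|x| <= 1].

Definition unit_sphere (R : realType) (X : normedModType R) : set X :=
  [set x | `|x| = 1].

Definition dnorm (R : realType) (X : normedModType R) (f : X -> R) : \bar R :=
  ereal_sup [set (`|f x|)%:E | x in @unit_ball R X].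

Definition dual_ball (R : realType) (X : normedModType R) : set (X -> R) :=
  [set g | is_dual g /\ (dnorm g <= 1%:E)%E].
Definition dual_sphere (R : realType) (X : normedModType R) : set (X -> R) :=
  [set g | is_dual g /\ dnorm g = 1%:E].

Definition beta_fxt (R : realType) (X : normedModType R)
  (f : X -> R) (x : X) (t : R) : \bar R :=
  ereal_inf [set (1 - g x)%:E | g in
    [set g | @dual_ball R X g /\ (t%:E <= dnorm (fun y => (f y - g y)%R))%E]].

Definition beta_ft (R : realType) (X : normedModType R) (f : X -> R) (t : R)
  : \bar R :=
  ereal_sup [set beta_fxt f x t | x in @unit_sphere R X].

Definition beta (R : realType) (X : normedModType R) (t : R) : \bar R :=
  ereal_inf [set beta_ft f t | f in @dual_sphere R X].

Definition cball (R : realType) (X : normedModType R) (x0 : X) (r0 : R) : set X :=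
  [set y | `|y - x0| <= r0].

Definition dist_set (R : realType) (X : normedModType R) (p : X) (A : set X)
  : \bar R :=
  ereal_inf [set (`|p - a|)%:E | a in A].

Definition diam (R : realType) (X : normedModType R) (A : set X) : \bar R :=
  ereal_sup [set (`|a - b|)%:E | a in A & b in A].

Definition UMIP (R : realType) (X : normedModType R) : Prop :=
  forall eps : R, 0 < eps ->
  exists K : R, 0 < K /\
    forall (C : set X) (p : X),
      C !=set0 -> closed C -> bounded_set C ->
      convex_set (C : set (convex_lmodType X)) ->
      (diam C < (eps^-1)%:E)%E -> (eps%:E <= dist_set p C)%E ->
      exists (x0 : X) (r0 : R),
        C `<=` cball x0 r0 /\ ((eps / 2)%:E <= dist_set p (cball x0 r0))%E
        /\ r0 <= K.

From HB Require Import structures.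
From mathcomp Require Import all_boot all_order all_algebra.
From mathcomp Require Import all_classical all_reals all_analysis.
From mathcomp Require Import ring lra.
Import Order.TTheory GRing.Theory Num.Theory.
Import numFieldNormedType.Exports.
Set Implicit Arguments. Unset Strict Implicit. Unset Printing Implicit Defensive.
Local Open Scope classical_set_scope.
Local Open Scope ring_scope.

(* Everything rests on the Hahn-Banach theorem, obtained from Zorn's lemma as
   the existence of a minimal sublinear functional below a given one, which is
   forced to be odd, hence linear.

   UMIP => beta(t) > 0: for [f] in S(X^* ), the cap {|y| <= 1/(3e), f y <= -e}
   is a small convex set away from 0, so UMIP encloses it in a ball B[z, r]
   with r <= K that avoids a neighbourhood of 0.  A unit functional almost
   attaining its norm at -z/|z| is then negative on the cap, hence nearly
   vanishes on ker f, hence is close to f: beta(f, -z/|z|, t) >= e/(4(K+1)).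

   beta(t) > 0 => UMIP: separate p from C by f in S(X^* ) and pick x with
   beta(f, x, t) > dl.  Unit functionals g with g x >= 1 - dl are close to f,
   the others satisfy g x < 1 - dl; in both cases g is bounded on C by its
   value on a ball centred far away in direction -x, which therefore contains C
   and, being close to a half-space of f, stays away from p. *)

Section Sublinear.
Context {R : realType} {X : normedModType R}.

Definition linear_form (f : X -> R) :=
  forall (a : R) (x y : X), f (a *: x + y) = a * f x + f y.

Lemma linear_form0 f : linear_form f -> f 0 = 0.
Proof. by move=> lf; have := lf 1 0 0; rewrite scaler0 addr0 mul1r; lra. Qed.

Lemma linear_formD f : linear_form f -> forall x y, f (x + y) = f x + f y.
Proof. by move=> lf x y; rewrite -[x in LHS]scale1r lf mul1r. Qed.

Lemma linear_formZ f : linear_form f -> forall a x, f (a *: x) = a * f x.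
Proof. by move=> lf a x; rewrite -[_ *: _]addr0 lf linear_form0 // addr0. Qed.

Lemma linear_formN f : linear_form f -> forall x, f (- x) = - f x.
Proof. by move=> lf x; rewrite -scaleN1r linear_formZ // mulN1r. Qed.

Lemma linear_formB f : linear_form f -> forall x y, f (x - y) = f x - f y.
Proof. by move=> lf x y; rewrite linear_formD // linear_formN. Qed.

Lemma linear_form_scale f (c : R) : linear_form f -> linear_form (fun y => c * f y).
Proof. by move=> lf a x y; rewrite lf; ring. Qed.

Lemma linear_form_sub f g :
  linear_form f -> linear_form g -> linear_form (fun y => f y - g y).
Proof. by move=> lf lg a x y; rewrite lf lg; ring. Qed.

Definition sublinear (P : X -> R) :=
  (forall x y, P (x + y) <= P x + P y) /\
  (forall (s : R) x, 0 < s -> P (s *: x) <= s * P x).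

Lemma sublinear0 P : sublinear P -> P 0 = 0.
Proof.
move=> [PD PZ]; apply/eqP; rewrite eq_le; apply/andP; split.
  by have := PZ 2^-1 0 ltac:(by rewrite invr_gt0); rewrite scaler0; nra.
by have := PD 0 0; rewrite addr0; lra.
Qed.

Lemma sublinearZ P : sublinear P -> forall (s : R) x, 0 < s -> P (s *: x) = s * P x.
Proof.
move=> [PD PZ] s x s0; apply/eqP; rewrite eq_le PZ //=.
have := PZ s^-1 (s *: x) ltac:(by rewrite invr_gt0).
rewrite scalerA mulVf ?gt_eqF // scale1r => h.
by rewrite -(@ler_pM2l _ s^-1) ?invr_gt0 // mulrA mulVf ?gt_eqF // mul1r.
Qed.

Lemma sublinear_oppr P : sublinear P -> forall x, - P (- x) <= P x.
Proof. by move=> sP x; have := sP.1 x (- x); rewrite subrr sublinear0 //; lra. Qed.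

Lemma sublinear_odd_linear P :
  sublinear P -> (forall x, P (- x) = - P x) -> linear_form P.
Proof.
move=> sP Podd.
have PD x y : P (x + y) = P x + P y.
  apply/eqP; rewrite eq_le sP.1 /=.
  by have := sP.1 (- x) (- y); rewrite -opprD !Podd; lra.
have PZ a x : P (a *: x) = a * P x.
  have [a0|a0|->] := ltgtP a 0; last by rewrite scale0r mul0r sublinear0.
  - by rewrite -[a]opprK scaleNr Podd sublinearZ ?oppr_gt0 //; lra.
  - exact: sublinearZ.
by move=> a x y; rewrite PD PZ.
Qed.

End Sublinear.

(* For a convex cone [W] lying below the graph of [N], any linear form below
   [cone_inf N W] satisfies [w.2 <= f w.1] on [W] (see [cone_inf_opp]). *)
Section ConeInfimum.
Context {R : realType} {X : normedModType R}.
Variables (N : X -> R) (W : set (X * R)).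
Hypothesis sN : sublinear N.
Hypothesis W0 : W (0, 0).
Hypothesis WD : forall w1 w2, W w1 -> W w2 -> W (w1.1 + w2.1, w1.2 + w2.2).
Hypothesis WZ : forall (s : R) w, 0 < s -> W w -> W (s *: w.1, s * w.2).
Hypothesis WN : forall w, W w -> w.2 <= N w.1.

Definition cone_inf y := inf [set N (y + w.1) - w.2 | w in W].

Let cone_inf_set_lb y : lbound [set N (y + w.1) - w.2 | w in W] (- N (- y)).
Proof.
move=> _ [w Ww <-].
have := sN.1 (y + w.1) (- y); rewrite addrAC subrr add0r.
by have := WN Ww; lra.
Qed.

Let cone_inf_set_n0 y : [set N (y + w.1) - w.2 | w in W] !=set0.
Proof. by exists (N (y + 0) - 0); exists (0, 0). Qed.

Lemma cone_inf_le y w : W w -> cone_inf y <= N (y + w.1) - w.2.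
Proof. by move=> Ww; apply: ge_inf; [exists (- N (- y)) | exists w]. Qed.

Lemma cone_inf_le_fun y : cone_inf y <= N y.
Proof. by have := cone_inf_le y W0; rewrite addr0 subr0. Qed.

Lemma cone_inf_opp w : W w -> cone_inf (- w.1) <= - w.2.
Proof. by move=> Ww; have := cone_inf_le (- w.1) Ww; rewrite addNr sublinear0 // sub0r. Qed.

Lemma cone_inf_sublinear : sublinear cone_inf.
Proof.
split.
- move=> x y; suff : cone_inf (x + y) - cone_inf x <= cone_inf y by lra.
  apply: lb_le_inf => // _ [w2 Ww2 <-].
  suff : cone_inf (x + y) - (N (y + w2.1) - w2.2) <= cone_inf x by lra.
  apply: lb_le_inf => // _ [w1 Ww1 <-].
  have := cone_inf_le (x + y) (WD Ww1 Ww2) => /=.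
  have := sN.1 (x + w1.1) (y + w2.1); rewrite addrACA; lra.
- move=> s x s0.
  suff h : s^-1 * cone_inf (s *: x) <= cone_inf x.
    by move: h; rewrite -(ler_pM2l s0) mulrA mulfV ?gt_eqF // mul1r.
  apply: lb_le_inf => // _ [w Ww <-].
  rewrite -(ler_pM2l s0) mulrA mulfV ?gt_eqF // mul1r.
  have := cone_inf_le (s *: x) (WZ s0 Ww) => /=.
  by rewrite -scalerDr (sublinearZ sN) // mulrBr; lra.
Qed.

End ConeInfimum.

Section HahnBanach.
Context {R : realType} {X : normedModType R}.

Definition pointwise_inf (A : set (X -> R)) (y : X) := inf [set P y | P in A].

Lemma chain_inf_sublinear (Q : X -> R) (A : set (X -> R)) : A !=set0 ->
  (forall P, A P -> sublinear P /\ forall x, P x <= Q x) ->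
  total_on A (fun P P' => forall x, P' x <= P x) ->
  [/\ sublinear (pointwise_inf A), forall x, pointwise_inf A x <= Q x
    & forall P x, A P -> pointwise_inf A x <= P x].
Proof.
move=> [P0 AP0] AQ Atot.
have inf_set_n0 y : [set P y | P in A] !=set0 by exists (P0 y), P0.
have inf_le P y : A P -> pointwise_inf A y <= P y.
  move=> AP; apply: ge_inf; last by exists P.
  exists (- Q (- y)) => _ [P' AP' <-].
  have [sP' P'Q] := AQ P' AP'; have := sublinear_oppr sP' y; have := P'Q (- y); lra.
have infQ x : pointwise_inf A x <= Q x.
  by have := inf_le P0 x AP0; have := (AQ P0 AP0).2 x; lra.
split => //; split.
- move=> x y; suff : pointwise_inf A (x + y) - pointwise_inf A x <= pointwise_inf A y by lra.
  apply: lb_le_inf => // _ [P2 AP2 <-].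
  suff : pointwise_inf A (x + y) - P2 y <= pointwise_inf A x by lra.
  apply: lb_le_inf => // _ [P1 AP1 <-].
  have [sP1 _] := AQ P1 AP1; have [sP2 _] := AQ P2 AP2.
  have [P21|P12] := Atot P1 P2 AP1 AP2.
  + by have := inf_le P2 (x + y) AP2; have := sP2.1 x y; have := P21 x; lra.
  + by have := inf_le P1 (x + y) AP1; have := sP1.1 x y; have := P12 y; lra.
- move=> s x s0.
  suff h : s^-1 * pointwise_inf A (s *: x) <= pointwise_inf A x.
    by move: h; rewrite -(ler_pM2l s0) mulrA mulfV ?gt_eqF // mul1r.
  apply: lb_le_inf => // _ [P AP <-].
  rewrite -(ler_pM2l s0) mulrA mulfV ?gt_eqF // mul1r.
  by have := inf_le P (s *: x) AP; have := (AQ P AP).1.2 s x s0; lra.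
Qed.

Lemma exists_minimal_sublinear (Q : X -> R) : sublinear Q ->
  exists P, [/\ sublinear P, forall x, P x <= Q x &
    forall P', sublinear P' -> (forall x, P' x <= P x) -> forall x, P x <= P' x].
Proof.
move=> sQ.
pose T := {P : X -> R | sublinear P /\ forall x, P x <= Q x}.
pose above : rel T := fun P P' => `[< forall x, sval P' x <= sval P x >].
have [t tmax] : exists t, premaximal above t.
  apply: (@ZL_preorder _ (exist _ Q (conj sQ (fun x => lexx _)))).
  - by move=> P; apply/asboolP => x.
  - move=> P1 P2 P3 /asboolP h12 /asboolP h23; apply/asboolP => x.
    exact: le_trans (h23 x) (h12 x).
  - move=> A Atot.
    have [->|/set0P[P0 AP0]] := eqVneq A set0.
      by exists (exist _ Q (conj sQ (fun x => lexx _))).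
    pose B := [set sval P | P in A].
    have Bn0 : B !=set0 by exists (sval P0), P0.
    have BQ' P : B P -> sublinear P /\ forall x, P x <= Q x.
      by move=> [P' _ <-]; exact: (svalP P').
    have Btot : total_on B (fun P P' => forall x, P' x <= P x).
      move=> _ _ [P1 AP1 <-] [P2 AP2 <-].
      by have [/asboolP|/asboolP] := Atot P1 P2 AP1 AP2; [left|right].
    have [sB BQ Ble] := chain_inf_sublinear Bn0 BQ' Btot.
    exists (exist _ (pointwise_inf B) (conj sB BQ)) => P AP; apply/asboolP => x.
    by apply: Ble; exists P.
have [sP PQ] := svalP t.
exists (sval t); split => // P' sP' P't x.
have /tmax/asboolP -> // : above t (exist _ P' (conj sP' (fun y => le_trans (P't y) (PQ y)))).
by apply/asboolP.
Qed.

Lemma minimal_sublinear_odd (P : X -> R) : sublinear P ->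
  (forall P', sublinear P' -> (forall x, P' x <= P x) -> forall x, P x <= P' x) ->
  forall a, P (- a) = - P a.
Proof.
move=> sP Pmin a.
(* Minimality against [cone_inf] of the ray through [(a, P a)] forces
   [P (- a) <= - P a]. *)
pose W := [set w : X * R | exists2 c : R, 0 <= c & w = (c *: a, c * P a)].
have W0 : W (0, 0) by exists 0; rewrite ?scale0r ?mul0r.
have WD w1 w2 : W w1 -> W w2 -> W (w1.1 + w2.1, w1.2 + w2.2).
  move=> [c1 c10 ->] [c2 c20 ->]; exists (c1 + c2); first exact: addr_ge0.
  by rewrite /= scalerDl mulrDl.
have WZ (c : R) w : 0 < c -> W w -> W (c *: w.1, c * w.2).
  move=> c0 [c1 c10 ->]; exists (c * c1); first by rewrite mulr_ge0 // ltW.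
  by rewrite /= scalerA mulrA.
have WN w : W w -> w.2 <= P w.1.
  move=> [c c0 ->] /=; have [->|cn0] := eqVneq c 0.
    by rewrite scale0r mul0r sublinear0.
  by rewrite sublinearZ // lt_neqAle eq_sym cn0.
have Wa : W (a, P a) by exists 1; rewrite ?scale1r ?mul1r.
have := Pmin _ (cone_inf_sublinear sP W0 WD WZ WN) (cone_inf_le_fun sP W0 WN) (- a).
have := cone_inf_opp sP WN Wa; have := sublinear_oppr sP a; rewrite /=; lra.
Qed.

Theorem hahn_banach (Q : X -> R) : sublinear Q ->
  exists f, linear_form f /\ forall x, f x <= Q x.
Proof.
move=> /exists_minimal_sublinear [P [sP PQ Pmin]].
by exists P; split => //; apply: sublinear_odd_linear => //; exact: minimal_sublinear_odd.
Qed.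

End HahnBanach.

Section DualNorm.
Context {R : realType} {X : normedModType R}.

Lemma dnorm_ge0 (f : X -> R) : (0 <= dnorm f)%E.
Proof.
apply: le_trans (ereal_sup_ubound _); last by exists 0; rewrite /unit_ball /= ?normr0.
by rewrite lee_fin.
Qed.

Lemma dnorm_le (f : X -> R) (a : R) : 0 <= a ->
  (forall y, `|f y| <= a * `|y|) -> (dnorm f <= a%:E)%E.
Proof.
move=> a0 fa; apply: ge_ereal_sup => _ [y yB <-]; rewrite lee_fin.
by apply: le_trans (fa y) _; rewrite -{2}[a]mulr1 ler_wpM2l.
Qed.

Lemma dnorm_le_bound (f : X -> R) (a : R) : linear_form f ->
  (dnorm f <= a%:E)%E -> forall y, `|f y| <= a * `|y|.
Proof.
move=> lf fa y; have [->|y0] := eqVneq y 0.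
  by rewrite linear_form0 // !normr0 mulr0.
have ny : 0 < `|y| by rewrite normr_gt0.
have : ((`|f (`|y|^-1 *: y)|)%:E <= a%:E)%E.
  apply: le_trans fa; apply: ereal_sup_ubound; exists (`|y|^-1 *: y) => //.
  by rewrite /unit_ball /= normrZ normrV ?unitfE ?normr_eq0 // normr_id mulVf ?gt_eqF.
rewrite lee_fin linear_formZ // normrM normrV ?unitfE ?normr_eq0 // normr_id.
by rewrite -(ler_pM2l ny) mulrA mulfV ?gt_eqF // mul1r mulrC.
Qed.

Lemma dnorm1_le_norm (f : X -> R) : linear_form f ->
  (dnorm f <= 1%:E)%E -> forall y, `|f y| <= `|y|.
Proof. by move=> lf f1 y; have := dnorm_le_bound lf f1 y; rewrite mul1r. Qed.

Lemma linear_continuous_bounded (f : X -> R) : linear_form f -> continuous f ->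
  exists2 M, 0 < M & forall y, `|f y| <= M * `|y|.
Proof.
move=> lf cf.
have : f x @[x --> (0 : X)] --> (0 : R) by rewrite -(linear_form0 lf); exact: cf.
move=> /cvgr_dist_lt /(_ 1 ltr01) /nbhs_norm0P [e /= e0 fe].
exists (2 / e); first by rewrite divr_gt0.
move=> y; have [->|y0] := eqVneq y 0; first by rewrite linear_form0 // !normr0 mulr0.
have ny : 0 < `|y| by rewrite normr_gt0.
pose c := e / 2 / `|y|.
have c0 : 0 < c by rewrite /c !divr_gt0.
have cy : c * `|y| = e / 2 by rewrite /c -mulrA mulVf ?gt_eqF // mulr1.
have := fe (c *: y); rewrite /= normrZ gtr0_norm // cy sub0r normrN.
rewrite linear_formZ // normrM gtr0_norm // => /(_ ltac:(lra)) cfy.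
have e2 : 0 < e / 2 by rewrite divr_gt0.
have efy : e / 2 * `|f y| < `|y|.
  have -> : e / 2 * `|f y| = `|y| * (c * `|f y|) by rewrite -cy; ring.
  by rewrite -[X in _ < X]mulr1 ltr_pM2l.
rewrite -(ler_pM2l e2); apply: ltW; apply: lt_le_trans efy _.
by have -> : e / 2 * (2 / e * `|y|) = `|y| by field; rewrite gt_eqF.
Qed.

Lemma linear_bounded_continuous (f : X -> R) (M : R) : linear_form f -> 0 <= M ->
  (forall y, `|f y| <= M * `|y|) -> continuous f.
Proof.
move=> lf M0 fM x; apply/cvgrPdist_lt => e e0.
have M1 : 0 < M + 1 by rewrite ltr_wpDl.
apply/nbhs_normP; exists (e / (M + 1)) => /=; first by rewrite divr_gt0.
move=> z /=; rewrite ltr_pdivlMr // -linear_formB // => xz.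
by apply: le_lt_trans (fM (x - z)) _; have := normr_ge0 (x - z); nra.
Qed.

Lemma contraction_is_dual (f : X -> R) : linear_form f ->
  (forall y, `|f y| <= `|y|) -> is_dual f.
Proof.
move=> lf f1; split => //.
by apply: (linear_bounded_continuous lf ler01) => y; rewrite mul1r.
Qed.

Lemma is_dual_dnorm (f : X -> R) : is_dual f ->
  exists2 n, 0 <= n & dnorm f = n%:E.
Proof.
move=> [lf cf]; have [M M0 fM] := linear_continuous_bounded lf cf.
have := dnorm_ge0 f; have := dnorm_le (ltW M0) fM.
by case: (dnorm f) => [r||] //= _ r0; exists r.
Qed.

Lemma dnormZ (f : X -> R) (c n : R) : linear_form f -> dnorm f = n%:E ->
  dnorm (fun y => c * f y) = (`|c| * n)%:E.
Proof.
move=> lf fn; have n0 : 0 <= n by rewrite -lee_fin -fn dnorm_ge0.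
have fb := dnorm_le_bound lf (ltac:(by rewrite fn) : (dnorm f <= n%:E)%E).
have [->|c0] := eqVneq c 0.
  rewrite normr0 mul0r; apply/eqP; rewrite eq_le dnorm_ge0 andbT.
  by apply: dnorm_le => // y; rewrite mul0r normr0 mul0r.
have cp : 0 < `|c| by rewrite normr_gt0.
have cfb : (dnorm (fun y => (c * f y)%R) <= (`|c| * n)%:E)%E.
  apply: dnorm_le; first by rewrite mulr_ge0.
  by move=> y; rewrite normrM -mulrA ler_wpM2l.
have := dnorm_ge0 (fun y => c * f y); move: cfb.
case E: (dnorm (fun y => c * f y)) => [m||] //=; rewrite !lee_fin => mcn m0.
have cfm := dnorm_le_bound (linear_form_scale c lf) (ltac:(by rewrite E) :
  (dnorm (fun y => (c * f y)%R) <= m%:E)%E).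
suff : n <= `|c|^-1 * m.
  move=> h; congr (_%:E); apply/eqP; rewrite eq_le mcn /=.
  by move: h; rewrite -(ler_pM2l cp) mulrA mulfV ?gt_eqF // mul1r.
rewrite -lee_fin -fn; apply: dnorm_le; first by rewrite mulr_ge0 // -lee_fin.
move=> y; have := cfm y; rewrite normrM => h.
by rewrite -(ler_pM2l cp) mulrA mulrA mulfV ?gt_eqF // mul1r.
Qed.

Lemma dnorm1_almost_attained (f : X -> R) (th : R) : linear_form f ->
  dnorm f = 1%:E -> 0 < th -> exists u, `|u| <= 1 /\ 1 - th <= f u.
Proof.
move=> lf f1 th0.
have : ((1 - th)%:E < dnorm f)%E by rewrite f1 lte_fin; lra.
move=> /ereal_sup_gt [_ [y y1 <-]]; rewrite lte_fin => fy.
have [fy0|fy0] := lerP 0 (f y).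
  by exists y; split => //; rewrite ger0_norm // in fy; exact: ltW.
exists (- y); rewrite normrN (linear_formN lf); split => //.
by rewrite ltr0_norm // in fy; exact: ltW.
Qed.

End DualNorm.

Section Separation.
Context {R : realType} {X : normedModType R}.

Lemma norm_sublinear : sublinear (fun y : X => `|y|).
Proof. by split=> [x y|s x s0]; rewrite ?ler_normD // normrZ gtr0_norm. Qed.

(* Hahn-Banach below [cone_inf] of the cone generated by [K x {mu}], which lies
   below the graph of the norm. *)
Lemma separate_convex_ball (K : set X) (mu : R) : 0 <= mu ->
  (forall k1 k2 (s : R), K k1 -> K k2 -> 0 <= s -> s <= 1 ->
     K (s *: k1 + (1 - s) *: k2)) ->
  (forall k, K k -> mu <= `|k|) ->
  exists f, [/\ linear_form f, forall y, `|f y| <= `|y| & forall k, K k -> mu <= f k].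
Proof.
move=> mu0 Kconv Kmu.
pose W := [set w : X * R | w = (0, 0) \/
  exists l k, [/\ 0 < l, K k & w = (l *: k, l * mu)]].
have W0 : W (0, 0) by left.
have WD w1 w2 : W w1 -> W w2 -> W (w1.1 + w2.1, w1.2 + w2.2).
  move=> [->|[l1 [k1 [l10 Kk1 ->]]]] [->|[l2 [k2 [l20 Kk2 ->]]]] /=.
  - by left; rewrite !addr0.
  - by right; exists l2, k2; rewrite !add0r.
  - by right; exists l1, k1; rewrite !addr0.
  have l0 : 0 < l1 + l2 by rewrite addr_gt0.
  right; exists (l1 + l2), ((l1 / (l1 + l2)) *: k1 + (1 - l1 / (l1 + l2)) *: k2).
  split => //.
    apply: Kconv => //; first by rewrite divr_ge0 // ltW.
    by rewrite ler_pdivrMr // mul1r lerDl ltW.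
  rewrite scalerDr !scalerA mulrDl; congr ((_ *: _ + _ *: _), _).
  + by field; exact: lt0r_neq0.
  + by field; exact: lt0r_neq0.
  + by rewrite mulrDl.
have WZ (c : R) w : 0 < c -> W w -> W (c *: w.1, c * w.2).
  move=> c0 [->|[l [k [l0 Kk ->]]]] /=; first by left; rewrite scaler0 mulr0.
  by right; exists (c * l), k; rewrite mulr_gt0 // scalerA mulrA.
have WN w : W w -> w.2 <= `|w.1|.
  move=> [->|[l [k [l0 Kk ->]]]] /=; first by rewrite normr0.
  by rewrite normrZ gtr0_norm // ler_pM2l // Kmu.
have sQ := cone_inf_sublinear norm_sublinear W0 WD WZ WN.
have [f [lf fQ]] := hahn_banach sQ.
have fN y : f y <= `|y|.
  exact: le_trans (fQ y) (cone_inf_le_fun norm_sublinear W0 WN y).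
exists f; split => // [y|k Kk].
  by rewrite ler_norml fN andbT; have := fN (- y); rewrite linear_formN // normrN lerNl.
have Wk : W (k, mu) by right; exists 1, k; rewrite scale1r mul1r.
have := fQ (- k); have := cone_inf_opp norm_sublinear WN Wk.
by rewrite (linear_formN lf) /=; lra.
Qed.

Lemma norming_form (x : X) :
  exists f, [/\ linear_form f, forall y, `|f y| <= `|y| & f x = `|x|].
Proof.
have [f [lf fN fx]] := @separate_convex_ball [set x] `|x| (normr_ge0 x)
  ltac:(by move=> k1 k2 s -> -> _ _; rewrite -scalerDl addrC subrK scale1r)
  ltac:(by move=> k ->).
exists f; split => //; apply/eqP; rewrite eq_le fx // andbT.
exact: le_trans (ler_norm _) (fN x).
Qed.

Lemma separate_convex_point (C : set X) (p : X) (mu : R) : 0 < mu -> C !=set0 ->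
  convex_set (C : set (convex_lmodType X)) -> (forall c, C c -> mu <= `|p - c|) ->
  exists f, [/\ is_dual f, dnorm f = 1%:E & forall c, C c -> mu <= f (p - c)].
Proof.
move=> mu0 [c1 Cc1] Cconv Cmu.
have [f0 [lf0 f0N f0C]] := @separate_convex_ball [set p - c | c in C] mu (ltW mu0)
  ltac:(move=> _ _ s [c Cc <-] [c' Cc' <-] s0 s1;
        exists (s *: c + (1 - s) *: c');
        [by have := Cconv c c' (Itv01 s0 s1); rewrite !inE => /(_ Cc Cc')
        |by rewrite !scalerBr opprD addrACA -scalerDl [s + _]addrC subrK scale1r])
  ltac:(by move=> _ [c Cc <-]; exact: Cmu).
have f0pC c : C c -> mu <= f0 (p - c) by move=> Cc; apply: f0C; exists c.
have f0d := contraction_is_dual lf0 f0N.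
have [n0 n00 f0n] := is_dual_dnorm f0d.
have n01 : n0 <= 1.
  by rewrite -lee_fin -f0n; apply: dnorm_le => // y; rewrite mul1r.
have f0b := dnorm_le_bound lf0 (ltac:(by rewrite f0n) : (dnorm f0 <= n0%:E)%E).
have n0p : 0 < n0.
  rewrite lt_neqAle n00 andbT; apply/eqP => n0e.
  have := f0b (p - c1); rewrite -n0e mul0r.
  by have := f0pC c1 Cc1; have := ler_norm (f0 (p - c1)); lra.
have n0inv : 1 <= n0^-1 by rewrite -(ler_pM2l n0p) mulr1 mulfV ?lt0r_neq0.
exists (fun y => n0^-1 * f0 y); split.
- split; first exact: linear_form_scale.
  apply: (linear_bounded_continuous (M := n0^-1) (linear_form_scale _ lf0)).
    by rewrite invr_ge0.
  by move=> y; rewrite normrM ger0_norm ?invr_ge0 // ler_pM2l ?invr_gt0.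
- by rewrite (dnormZ _ lf0 f0n) ger0_norm ?invr_ge0 // mulVf ?lt0r_neq0.
- move=> c Cc; have := f0pC c Cc => f0c.
  have : f0 (p - c) <= n0^-1 * f0 (p - c) by rewrite ler_peMl //; lra.
  lra.
Qed.

End Separation.

Section BetaBounds.
Context {R : realType} {X : normedModType R}.

Lemma beta_fxt_ge (f : X -> R) (x : X) (t d : R) :
  (forall g, linear_form g -> (forall y, `|g y| <= `|y|) -> 1 - d < g x ->
     (dnorm (fun y => (f y - g y)%R) < t%:E)%E) ->
  (d%:E <= beta_fxt f x t)%E.
Proof.
move=> fg; apply: le_ereal_inf_tmp => _ [g [[[lg _] g1] fgt] <-].
rewrite lee_fin leNgt; apply/negP => gx.
by have := fg g lg (dnorm1_le_norm lg g1) ltac:(lra); rewrite ltNge fgt.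
Qed.

Lemma beta_fxt_gt (f : X -> R) (x : X) (t d : R) : linear_form f ->
  (d%:E < beta_fxt f x t)%E ->
  forall g, linear_form g -> (forall y, `|g y| <= `|y|) -> 1 - d <= g x ->
  forall y, `|f y - g y| <= t * `|y|.
Proof.
move=> lf dlt g lg g1 gx; apply: dnorm_le_bound (linear_form_sub lf lg) _.
rewrite leNgt; apply/negP => fgt.
have : (beta_fxt f x t <= (1 - g x)%:E)%E.
  apply: ereal_inf_lbound; exists g => //; split; last exact: ltW.
  split; first exact: contraction_is_dual.
  by apply: dnorm_le => // y; rewrite mul1r.
by move=> /(lt_le_trans dlt); rewrite lte_fin; lra.
Qed.

Lemma le_beta (t d : R) :
  (forall f : X -> R, dual_sphere f -> exists2 x : X, unit_sphere x & (d%:E <= beta_fxt f x t)%E) ->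
  (d%:E <= beta X t)%E.
Proof.
move=> fx; apply: le_ereal_inf_tmp => _ [f Sf <-].
have [x Sx dx] := fx f Sf; apply: le_trans dx _.
by apply: ereal_sup_ubound; exists x.
Qed.

Lemma beta_gt (t d : R) (f : X -> R) : (d%:E < beta X t)%E -> dual_sphere f ->
  exists2 x, `|x| = 1 & (d%:E < beta_fxt f x t)%E.
Proof.
move=> dlt Sf; have : (beta X t <= beta_ft f t)%E by apply: ereal_inf_lbound; exists f.
by move=> /(lt_le_trans dlt) /ereal_sup_gt [_ [x Sx <-] dx]; exists x.
Qed.

End BetaBounds.

Section SmallOnKernel.
Context {R : realType} {X : normedModType R}.

(* Project onto the kernel of [f] along [u]: [y = k + (f y / f u) u]. *)
Lemma near_multiple_on_kernel (f g : X -> R) (u : X) (sg : R) :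
  linear_form f -> linear_form g -> (forall y, `|f y| <= `|y|) ->
  `|u| <= 1 -> 1 <= 2 * f u -> 0 <= sg ->
  (forall k, f k = 0 -> `|g k| <= sg * `|k|) ->
  forall y, `|g y - g u / f u * f y| <= 3 * sg * `|y|.
Proof.
move=> lf lg f1 u1 fu sg0 g_ker y.
have fu0 : 0 < f u by lra.
pose k := y - (f y / f u) *: u.
have fk : f k = 0 by rewrite (linear_formB lf) (linear_formZ lf) divfK ?subrr ?gt_eqF.
have gk : g y - g u / f u * f y = g k.
  by rewrite (linear_formB lg) (linear_formZ lg); field; rewrite gt_eqF.
have k3 : `|k| <= 3 * `|y|.
  apply: le_trans (ler_normB _ _) _; rewrite normrZ normrM normfV (gtr0_norm fu0).
  have : `|f y| / f u <= 2 * `|y|.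
    by rewrite ler_pdivrMr //; apply: le_trans (f1 y) _; have := normr_ge0 y; nra.
  have : 0 <= `|f y| / f u by rewrite divr_ge0 // ltW.
  by have := normr_ge0 u; nra.
rewrite gk; apply: le_trans (g_ker _ fk) _.
by have := normr_ge0 k; nra.
Qed.

Lemma dual_dist_of_small_on_kernel (f g : X -> R) (u x : X) (sg th dl : R) :
  linear_form f -> linear_form g ->
  (forall y, `|f y| <= `|y|) -> (forall y, `|g y| <= `|y|) ->
  `|u| <= 1 -> 1 <= 2 * f u -> 0 <= th -> 1 - th <= f u -> 0 <= g u -> 0 <= sg ->
  (forall k, f k = 0 -> `|g k| <= sg * `|k|) ->
  `|x| = 1 -> 1 - dl <= g x ->
  forall y, `|f y - g y| <= (6 * sg + dl + 2 * th) * `|y|.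
Proof.
move=> lf lg f1 g1 u1 fu th0 futh gu0 sg0 g_ker x1 gx y.
have near := near_multiple_on_kernel lf lg f1 u1 fu sg0 g_ker.
have fu0 : 0 < f u by lra.
pose lam := g u / f u.
have lam0 : 0 <= lam by rewrite divr_ge0 // ltW.
have lam_ub : lam <= (f u)^-1.
  rewrite /lam -[X in _ <= X]mul1r ler_pM2r ?invr_gt0 //.
  exact: le_trans (ler_norm _) (le_trans (g1 u) u1).
rewrite -/lam in near; clearbody lam.
have lam_lb : 1 - dl - 3 * sg <= lam.
  have := near x; rewrite x1 mulr1 => gfx.
  have := f1 x; rewrite x1 => fx.
  have : lam * f x <= lam.
    by apply: le_trans (ler_norm _) _; rewrite normrM ger0_norm // ler_piMr.
  by have := ler_norm (g x - lam * f x); lra.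
have dl0 : 0 <= dl by have := g1 x; rewrite x1; have := ler_norm (g x); lra.
have lam1 : `|1 - lam| <= dl + 3 * sg + 2 * th.
  rewrite ler_norml; apply/andP; split; last by lra.
  suff : (f u)^-1 <= 1 + 2 * th by lra.
  rewrite -(ler_pM2r fu0) mulVf ?gt_eqF //.
  by have [th2|th2] := lerP (2 * th) 1; nra.
have -> : f y - g y = (1 - lam) * f y - (g y - lam * f y) by ring.
apply: le_trans (ler_normB _ _) _; rewrite normrM.
have := f1 y; have := near y; have := normr_ge0 (f y).
by have := normr_ge0 (1 - lam); have := normr_ge0 y; nra.
Qed.

End SmallOnKernel.

Section Forward.
Context {R : realType} {X : normedModType R}.
Local Open Scope convex_scope.

Definition cap (f : X -> R) (a e : R) := [set y : X | `|y| <= a /\ f y <= - e].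

Lemma cap_closed (f : X -> R) (a e : R) : continuous f -> closed (cap f a e).
Proof.
move=> cf; apply: closedI.
  apply: (@preimage_closed _ _ (fun y : X => `|y|) [set r | r <= a]).
    by move=> y _; exact: norm_continuous.
  exact: closed_le.
by apply: (@preimage_closed _ _ f [set r | r <= - e]); [move=> y _; exact: cf|exact: closed_le].
Qed.

Lemma cap_bounded (f : X -> R) (a e : R) : bounded_set (cap f a e).
Proof.
rewrite /= /bounded_near; near=> M => y [ya _] /=.
by apply: le_trans ya _; near: M; apply: nbhs_pinfty_ge; rewrite num_real.
Unshelve. all: by end_near.
Qed.

Lemma cap_convex (f : X -> R) (a e : R) : linear_form f ->
  convex_set (cap f a e : set (convex_lmodType X)).
Proof.
move=> lf y1 y2 l; rewrite !inE => -[y1a fy1] [y2a fy2].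
have -> : (y1 <| l |> y2 : X) = l%:num *: y1 + (1 - l%:num) *: y2 by [].
have l0 : 0 <= l%:num by [].
have l1 : l%:num <= 1 by [].
split; last by rewrite lf (linear_formZ lf); nra.
apply: le_trans (ler_normD _ _) _.
by rewrite !normrZ ger0_norm // ger0_norm ?subr_ge0 //; nra.
Qed.

Lemma cap_diam (f : X -> R) (a e : R) : (diam (cap f a e) <= (2 * a)%:E)%E.
Proof.
apply: ge_ereal_sup => _ [y1 [y1a _] [y2 [y2a _] <-]]; rewrite lee_fin.
by apply: le_trans (ler_normB _ _) _; lra.
Qed.

Lemma cap_dist0 (f : X -> R) (a e : R) : (forall y, `|f y| <= `|y|) ->
  (e%:E <= dist_set (0%R : X) (cap f a e))%E.
Proof.
move=> f1; apply: le_ereal_inf_tmp => _ [y [_ fy] <-]; rewrite lee_fin sub0r normrN.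
by apply: le_trans _ (f1 y); have := ler_norm (- f y); rewrite normrN; lra.
Qed.

Lemma cball_far_from_origin (z : X) (r s : R) : 0 <= r -> 0 < s ->
  (s%:E <= dist_set (0%R : X) (cball z r))%E -> r + s <= `|z|.
Proof.
move=> r0 s0 zrs.
have far w : `|w - z| <= r -> s <= `|w|.
  move=> wz; rewrite -lee_fin; apply: le_trans zrs _.
  by apply: ereal_inf_lbound; exists w => //; rewrite sub0r normrN.
have [zr|zr] := lerP `|z| r.
  by have := far 0; rewrite sub0r normrN normr0 => /(_ zr); lra.
have z0 : 0 < `|z| by lra.
pose w := ((`|z| - r) / `|z|) *: z.
have wz : `|w - z| = r.
  have -> : w - z = (- (r / `|z|)) *: z.
    by rewrite /w -[X in _ - X]scale1r -scalerBl; congr (_ *: _); field; rewrite gt_eqF.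
  by rewrite normrZ normrN ger0_norm ?divr_ge0 // divfK ?gt_eqF.
have wn : `|w| = `|z| - r by rewrite normrZ ger0_norm ?divr_ge0 ?subr_ge0 ?ltW // divfK ?gt_eqF.
by have := far w; rewrite wz wn => /(_ (lexx _)); lra.
Qed.

Lemma form_le_on_cball (g : X -> R) (z y : X) (r dl : R) : linear_form g ->
  (forall y, `|g y| <= `|y|) -> 0 < `|z| -> 1 - dl <= g ((- `|z|^-1) *: z) ->
  `|y - z| <= r -> g y <= r - `|z| * (1 - dl).
Proof.
move=> lg g1 z0 gx yz.
have gyz : g y - g z <= r.
  by rewrite -(linear_formB lg); exact: le_trans (ler_norm _) (le_trans (g1 _) yz).
have : `|z| * (1 - dl) <= - g z.
  by move: gx; rewrite (linear_formZ lg) -(ler_pM2l z0) mulrA mulrN mulfV ?gt_eqF // mulN1r.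
lra.
Qed.

(* Testing [g] on [+-m k - c u], which lie in the cap for [k] in the kernel
   of [f] and [m |k| = a - c]. *)
Lemma small_on_kernel_of_cap (f g : X -> R) (u : X) (a c e : R) :
  linear_form f -> linear_form g -> (forall y, `|g y| <= `|y|) ->
  `|u| <= 1 -> 0 <= c -> c < a -> e <= c * f u ->
  (forall y, cap f a e y -> g y <= 0) ->
  forall k, f k = 0 -> `|g k| <= c / (a - c) * `|k|.
Proof.
move=> lf lg g1 u1 c0 ca cfu gcap k fk.
have [->|k0] := eqVneq k 0; first by rewrite linear_form0 // !normr0 mulr0.
have kp : 0 < `|k| by rewrite normr_gt0.
have [m m0 mk] : exists2 m, 0 < m & m * `|k| = a - c.
  by exists ((a - c) / `|k|); rewrite ?divr_gt0 ?subr_gt0 // divfK ?gt_eqF.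
have capk (sgn : R) : `|sgn| = 1 -> cap f a e ((sgn * m) *: k + (- c) *: u).
  move=> sgn1; split; last by rewrite (linear_formD lf) !(linear_formZ lf) fk mulr0; lra.
  apply: le_trans (ler_normD _ _) _.
  rewrite !normrZ sgn1 mul1r (gtr0_norm m0) mk normrN (ger0_norm c0).
  have : c * `|u| <= c by rewrite ler_piMr.
  lra.
have gu1 : c * g u <= c.
  by rewrite ler_piMr //; exact: le_trans (ler_norm _) (le_trans (g1 u) u1).
have := gcap _ (capk 1 (normr1 _)); have := gcap _ (capk (-1) ltac:(by rewrite normrN normr1)).
rewrite !(linear_formD lg) !(linear_formZ lg) mul1r mulN1r => gm gp.
have mg : m * `|g k| <= c.
  by have [gk0|gk0] := lerP 0 (g k); [rewrite ger0_norm|rewrite ltr0_norm]; lra.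
rewrite -(ler_pM2l m0); apply: le_trans mg _.
by rewrite mulrA [m * _]mulrC -mulrA mk divfK // gt_eqF // subr_gt0.
Qed.

Lemma cap_point (f : X -> R) (u : X) (e : R) : linear_form f -> 0 < e -> e <= 1 / 100 ->
  `|u| <= 1 -> 1 <= 2 * f u -> cap f (3 * e)^-1 e ((- (2 * e)) *: u).
Proof.
move=> lf e0 e1 u1 fu; split; last by rewrite (linear_formZ lf); nra.
rewrite normrZ normrN ger0_norm; last by lra.
have : 1 <= (3 * e)^-1 by rewrite invf_ge1 ?mulr_gt0 //; lra.
by have := normr_ge0 u; nra.
Qed.

Lemma beta_fxt_ge_of_cap_ball (f : X -> R) (u z : X) (t e K r dl : R) :
  linear_form f -> (forall y, `|f y| <= `|y|) -> `|u| <= 1 -> 1 - t / 8 <= f u ->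
  0 < t -> t < 1 -> t = 100 * e -> 0 < dl -> dl * (K + 1) = e / 4 ->
  0 <= r -> r <= K -> r + e / 2 <= `|z| -> cap f (3 * e)^-1 e `<=` cball z r ->
  (dl%:E <= beta_fxt f ((- `|z|^-1) *: z) t)%E.
Proof.
move=> lf f1 u1 fu t0 t1 te dl0 dlK r0 rK zr capB.
have e0 : 0 < e by lra.
have fu2 : 1 <= 2 * f u by lra.
have capu := cap_point lf e0 ltac:(lra) u1 fu2.
pose a := (3 * e)^-1; pose c := 2 * e.
have ae : a * e = 1 / 3 by rewrite /a; field; lra.
have z0 : 0 < `|z| by lra.
have x1 : `|(- `|z|^-1) *: z| = 1 by rewrite normrZ normrN normfV normr_id mulVf ?gt_eqF.
apply: beta_fxt_ge => g lg g1 gx.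
have gcap y : cap f a e y -> g y <= - (e / 4).
  move=> /capB yz; have := form_le_on_cball lg g1 z0 (ltW gx) yz.
  have : (r + e / 2) * (1 - dl) <= `|z| * (1 - dl) by rewrite ler_pM2r //; nra.
  have : dl * r <= dl * K by rewrite ler_pM2l.
  have : dl * (e / 2) <= dl by rewrite ler_piMr ?ltW //; lra.
  nra.
have gu : 0 < g u by have := gcap _ capu; rewrite (linear_formZ lg); nra.
have ca : c < a by rewrite /c -(ltr_pM2r e0) ae; nra.
have gcap0 y : cap f a e y -> g y <= 0 by move=> /gcap; lra.
have c0 : 0 <= c by rewrite /c; lra.
have cfu : e <= c * f u by rewrite /c; nra.
have gker := small_on_kernel_of_cap lf lg g1 u1 c0 ca cfu gcap0.
have sg0 : 0 <= c / (a - c) by rewrite divr_ge0 ?subr_ge0 ?ltW // /c; lra.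
have sge : c / (a - c) <= e.
  have : c / (a - c) * ((a - c) * e) = 2 * e * e.
    by rewrite /c; field; rewrite gt_eqF ?subr_gt0.
  have : 3 / 10 <= (a - c) * e by rewrite mulrBl ae /c; nra.
  nra.
have th0 : 0 <= t / 8 by lra.
have fg := dual_dist_of_small_on_kernel lf lg f1 g1 u1 fu2 th0 fu (ltW gu) sg0 gker x1
  (ltW gx).
apply: le_lt_trans (dnorm_le _ fg) _; first by lra.
have dle : dl <= e / 4 by have := le_trans r0 rK; nra.
by rewrite lte_fin; lra.
Qed.

Lemma umip_beta_pos : UMIP X -> forall t : R, 0 < t -> t < 1 -> (0%:E < beta X t)%E.
Proof.
move=> umip t t0 t1.
pose e := t / 100; have e0 : 0 < e by rewrite divr_gt0.
have te : t = 100 * e by rewrite /e; field.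
have [K [K0 HK]] := umip e e0.
pose dl := e / (4 * (K + 1)).
have dl0 : 0 < dl by rewrite divr_gt0 //; lra.
have dlK : dl * (K + 1) = e / 4 by rewrite /dl; field; lra.
apply: (@lt_le_trans _ _ dl%:E); first by rewrite lte_fin.
apply: le_beta => f [[lf cf] f1].
have f1' := dnorm1_le_norm lf (ltac:(by rewrite f1) : (dnorm f <= 1%:E)%E).
have [u [u1 fu]] := dnorm1_almost_attained lf f1 (ltac:(lra) : 0 < t / 8).
have capu := cap_point lf e0 ltac:(lra) u1 ltac:(lra).
have Cdiam : (diam (cap f (3 * e)^-1 e) < (e^-1)%:E)%E.
  apply: le_lt_trans (cap_diam f _ e) _; rewrite lte_fin.
  have ae : (3 * e)^-1 * e = 1 / 3 by field; lra.
  by rewrite -(ltr_pM2r e0) mulVf ?gt_eqF // -mulrA ae; lra.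
have [z [r [capB [zB rK]]]] := HK _ 0 (ex_intro _ _ capu) (cap_closed cf)
  (cap_bounded f _ e) (cap_convex lf) Cdiam (cap_dist0 _ e f1').
have r0 : 0 <= r by apply: le_trans (capB _ capu); exact: normr_ge0.
have zr : r + e / 2 <= `|z| by apply: cball_far_from_origin zB => //; rewrite divr_gt0.
exists ((- `|z|^-1) *: z).
  by rewrite /unit_sphere /= normrZ normrN normfV normr_id mulVf // gt_eqF //; lra.
exact: (beta_fxt_ge_of_cap_ball lf f1' u1 fu t0 t1 te dl0 dlK r0 rK zr capB).
Qed.

End Forward.

Section Backward.
Context {R : realType} {X : normedModType R}.

Lemma diam_le (C : set X) (D : R) (c c' : X) :
  (diam C < D%:E)%E -> C c -> C c' -> `|c - c'| <= D.
Proof.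
move=> CD Cc Cc'; apply/ltW; rewrite -lte_fin; apply: le_lt_trans CD.
by apply: ereal_sup_ubound; exists c => //; exists c'.
Qed.

Lemma dist_set_le (C : set X) (p c : X) (e : R) :
  (e%:E <= dist_set p C)%E -> C c -> e <= `|p - c|.
Proof. by move=> eC Cc; rewrite -lee_fin; apply: le_trans eC _; apply: ereal_inf_lbound; exists c. Qed.

Lemma exists_almost_max (S : set X) (h : X -> R) (M eps : R) : 0 < eps -> S !=set0 ->
  (forall c, S c -> h c <= M) -> exists2 c0, S c0 & forall c, S c -> h c - h c0 <= eps.
Proof.
move=> eps0 [c1 Sc1] hM.
have hS : has_sup [set h c | c in S].
  by split; [exists (h c1), c1|exists M => _ [c Sc <-]; exact: hM].
have [_ [c0 Sc0 <-] hc0] := sup_adherent eps0 hS.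
exists c0 => // c Sc.
have : h c <= sup [set h c | c in S] by apply: sup_upper_bound => //; exists c.
lra.
Qed.

Lemma dist_cball_ge (h : X -> R) (p c0 x : X) (r s : R) : linear_form h ->
  (forall y, `|h y| <= `|y|) -> h x = 1 ->
  ((h (p - c0) - s)%R%:E <= dist_set p (cball (c0 - r *: x)%R (r + s)%R))%E.
Proof.
move=> lh h1 hx; apply: le_ereal_inf_tmp => _ [w wB <-]; rewrite lee_fin.
have hpz : h (p - (c0 - r *: x)) = h (p - c0) + r.
  by rewrite opprB addrA addrAC (linear_formD lh (p - c0)) (linear_formZ lh) hx mulr1.
have := le_trans (ler_norm _) (h1 (p - (c0 - r *: x))); rewrite hpz.
have := ler_normD (p - w) (w - (c0 - r *: x)); rewrite addrA subrK.
by rewrite /cball /= in wB; lra.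
Qed.

(* A unit functional [g] either nearly attains its norm at [x], and is then
   close to [h], or is bounded by [1 - dl] at [x], and then [r dl = D]
   absorbs the diameter of [C]. *)
Lemma cball_contains (C : set X) (h : X -> R) (x c0 : X) (t dl D r : R) :
  linear_form h -> `|x| = 1 -> 0 <= t -> 0 <= r -> r * dl = D ->
  (forall g, linear_form g -> (forall y, `|g y| <= `|y|) -> 1 - dl <= g x ->
     forall y, `|h y - g y| <= 2 * t * `|y|) ->
  (forall c c', C c -> C c' -> `|c - c'| <= D) ->
  C c0 -> (forall c, C c -> h c - h c0 <= t * D) ->
  C `<=` cball (c0 - r *: x) (r + 3 * t * D).
Proof.
move=> lh x1 t0 r0 rdl hg CD Cc0 hc0 c Cc; rewrite /cball /=.
have [g [lg g1 <-]] := norming_form (c - (c0 - r *: x)).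
rewrite opprB addrA addrAC (linear_formD lg (c - c0)) (linear_formZ lg).
have cc0 := CD c c0 Cc Cc0.
have gcc0 : g (c - c0) <= D := le_trans (ler_norm _) (le_trans (g1 _) cc0).
have gx1 : g x <= 1 by rewrite -x1; exact: le_trans (ler_norm _) (g1 x).
have rgx : r * g x <= r by rewrite ler_piMr.
have [gx|gx] := lerP (1 - dl) (g x).
  have := hg g lg g1 gx (c - c0); rewrite (linear_formB lh).
  have := ler_norm (- (h c - h c0 - g (c - c0))); rewrite normrN.
  have : t * `|c - c0| <= t * D by rewrite ler_wpM2l.
  by have := hc0 c Cc; lra.
have : r * g x <= r * (1 - dl) by rewrite ler_wpM2l //; lra.
by rewrite mulrBr mulr1 rdl; have := mulr_ge0 t0 (le_trans (normr_ge0 _) cc0); lra.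
Qed.

Lemma separate_far_set (C : set X) (p : X) (e D : R) : 0 < e -> C !=set0 ->
  convex_set (C : set (convex_lmodType X)) ->
  (forall c c', C c -> C c' -> `|c - c'| <= D) -> (forall c, C c -> e <= `|p - c|) ->
  exists f, [/\ dual_sphere f & forall (c : X) (t : R), C c -> 0 <= t -> t <= 1 ->
    e - t * (2 * D + e) <= f (p - c) - t * `|p - c|].
Proof.
move=> e0 [c1 Cc1] Cconv CD Ce.
pose d := `|p - c1|.
have pc c : C c -> `|p - c| <= d + D.
  move=> Cc; have := ler_normD (p - c1) (c1 - c); rewrite addrA subrK.
  by have := CD c1 c Cc1 Cc; rewrite /d; lra.
pose mu := Num.max e (d - D).
have mu_e : e <= mu by rewrite le_max lexx.
have mu_le c : C c -> mu <= `|p - c|.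
  move=> Cc; rewrite ge_max Ce //=.
  have := ler_normD (p - c) (c - c1); rewrite addrA subrK.
  by have := CD c c1 Cc Cc1; rewrite /d; lra.
have [f [df f1 fC]] := separate_convex_point (lt_le_trans e0 mu_e)
  (ex_intro _ _ Cc1) Cconv mu_le.
exists f; split => // c t Cc t0 t1.
have : t * `|p - c| <= t * (d + D) by rewrite ler_wpM2l // pc.
have := fC c Cc.
have [dDe|dDe] := lerP d (D + e).
  have : t * (d + D) <= t * (2 * D + e) by rewrite ler_wpM2l //; lra.
  lra.
have : (D + e) * (1 - t) <= d * (1 - t) by rewrite ler_wpM2r //; lra.
have : d - D <= mu by rewrite le_max lexx orbT.
nra.
Qed.

Lemma beta_pos_umip : (forall t : R, 0 < t -> t < 1 -> (0%:E < beta X t)%E) -> UMIP X.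
Proof.
move=> beta_pos e e0.
pose D := e^-1; have D0 : 0 < D by rewrite invr_gt0.
pose t := e / (2 * (5 * D + e)).
have t0 : 0 < t by rewrite divr_gt0 //; lra.
have tD : t * (5 * D + e) = e / 2 by rewrite /t; field; lra.
have t1 : t < 1 by nra.
have [dl dl0 dlb] : exists2 dl, 0 < dl & (dl%:E < beta X t)%E.
  case: (beta X t) (beta_pos t t0 t1) => [b||] //= b0.
    have {}b0 : 0 < b by rewrite -lte_fin.
    by exists (b / 2); rewrite ?lte_fin; lra.
  by exists 1; rewrite ?ltry.
pose r := D / dl.
have rdl : r * dl = D by rewrite /r divfK ?gt_eqF.
have r0 : 0 < r by rewrite divr_gt0.
have tD0 : 0 < t * D by rewrite mulr_gt0.
exists (r + 3 * t * D + 1); split; first by lra.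
move=> C p Cn0 _ _ Cconv Cdiam Cdist; have [c1 Cc1] := Cn0.
have CD c c' : C c -> C c' -> `|c - c'| <= D by exact: diam_le.
have [f [[[lf cf] f1] fC]] := separate_far_set e0 Cn0 Cconv CD (fun c => dist_set_le Cdist).
have [x x1 xb] := beta_gt dlb (conj (conj lf cf) f1 : dual_sphere f).
have fg := beta_fxt_gt lf xb.
have [h [lh h1 hx]] := norming_form x; rewrite x1 in hx.
have fh y : `|f y - h y| <= t * `|y| by apply: fg => //; lra.
have hg g : linear_form g -> (forall y, `|g y| <= `|y|) -> 1 - dl <= g x ->
    forall y, `|h y - g y| <= 2 * t * `|y|.
  move=> lg g1 gx y; have := ler_normD (h y - f y) (f y - g y).
  rewrite addrA subrK (distrC (h y) (f y)).
  by have := fh y; have := fg g lg g1 gx y; lra.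
have [c0 Cc0 hc0] : exists2 c0, C c0 & forall c, C c -> h c - h c0 <= t * D.
  apply: (exists_almost_max (M := h c1 + D)) => // c Cc.
  have := le_trans (ler_norm _) (le_trans (h1 _) (CD c c1 Cc Cc1)).
  by rewrite (linear_formB lh); lra.
exists (c0 - r *: x), (r + 3 * t * D); split; [|split]; last by lra.
  exact: (cball_contains lh x1 (ltW t0) (ltW r0) rdl hg CD Cc0 hc0).
apply: le_trans (dist_cball_ge p c0 r (3 * t * D) lh h1 hx); rewrite lee_fin.
have := fC c0 t Cc0 (ltW t0) (ltW t1); have := fh (p - c0).
by have := ler_norm (f (p - c0) - h (p - c0)); lra.
Qed.

End Backward.

Unset Implicit Arguments.

Theorem mainTheorem13 (R : realType) (X : completeNormedModType R) :
  UMIP X <-> (forall t : R, 0 < t -> t < 1 -> (0%:E < beta X t)%E).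
Proof. by split; [exact: umip_beta_pos | exact: beta_pos_umip]. Qed.
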